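(* Fix an integer $J\ge 1$, a non-decreasing function $\alpha:[0,1]\to(0,\infty)$, and real numbers (edge latencies) $\ell_1\le \ell_2\le\cdots\le \ell_J$, where the edges $j\in\{1,\dots,J\}$ are indexed in order of non-decreasing latency. Let $x_1,\dots,x_J\ge 0$ with $\sum_{j=1}^J x_j=1$ be a desired flow, and set $a_0=0$ and $a_j=\sum_{k=1}^{j}x_k$ for $j=1,\dots,J$ (so $a_J=1$). Consider the assignment $x:[0,1]\to\{1,\dots,J\}$ that routes the users $a\in[a_{j-1},a_j)$ (for $j<J$) and $a\in[a_{J-1},1]$ (for $j=J$) to edge $j$, so that edge $j$ carries flow $x_j$. Let $\tau_J\in\mathbb{R}$ be arbitrary and define, for every $j\in\{1,\dots,J\}$, $$\tau_j=\tau_J+\sum_{k=j}^{J-1}\frac{\ell_{k+1}-\ell_k}{\alpha(a_k)}.$$ Then $x$ is a Nash (equilibrium) flow for the instance $(\alpha,\ell,\tau)$: for every user $a\in[0,1]$ and every edge $j'\in\{1,\dots,J\}$, $$\ell_{x(a)}+\alpha(a)\,\tau_{x(a)}\;\le\;\ell_{j'}+\alpha(a)\,\tau_{j'}.$$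
   Context: Setting: a single source–sink pair connected by $J$ parallel edges (delivery modes). The population of users is the interval $[0,1]$ (nonatomic; each $a\in[0,1]$ is an infinitesimal user), and $\alpha(a)$ is user $a$'s trade-off between price and time. Edge $j$ has latency $\ell_j$ (the latency evaluated at the given flow; prices do not affect latencies) and price $\tau_j$. User $a$ evaluates edge $j$ by the cost $\ell_j+\alpha(a)\tau_j$. A flow $x:[0,1]\to\{1,\dots,J\}$ (Lebesgue measurable) is a Nash flow for $(\alpha,\ell,\tau)$ if every user is assigned to an edge minimizing its cost, i.e. $\ell_{x(a)}+\alpha(a)\tau_{x(a)}\le \ell_{j}+\alpha(a)\tau_{j}$ for all $a\in[0,1]$ and all edges $j$. *)

(* R : realType, edges indexed by nat 1..J. *)
From mathcomp Require Import all_boot all_order all_algebra.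
From mathcomp Require Import reals.
Set Implicit Arguments. Unset Strict Implicit. Unset Printing Implicit Defensive.
Import Order.TTheory GRing.Theory Num.Theory.
Local Open Scope ring_scope.

Definition apos (R : realType) (x : nat -> R) (j : nat) : R :=
  \sum_(1 <= k < j.+1) x k.

Definition tau (R : realType) (J : nat) (alpha : R -> R) (ell x : nat -> R)
  (tauJ : R) (j : nat) : R :=
  tauJ + \sum_(j <= k < J) (ell k.+1 - ell k) / alpha (apos x k).

From mathcomp Require Import all_boot all_order all_algebra.
From mathcomp Require Import reals.
From mathcomp Require Import ring zify.
Import Order.TTheory GRing.Theory Num.Theory.
Local Open Scope ring_scope.

(* Fix a user a and write A = alpha(a).  Along the edges, the cost
   c(k) = ell_k + A * tau_k changes by
       c(k+1) - c(k) = (ell_{k+1} - ell_k) * (1 - A / alpha(a_k)),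
   since tau_k - tau_{k+1} = (ell_{k+1} - ell_k) / alpha(a_k).  The first
   factor is nonnegative (latencies are sorted), and the second is
   nonpositive when alpha(a_k) <= A and nonnegative when A <= alpha(a_k).
   The user a is routed to an edge i with a_{i-1} <= a <= a_i; as the prefix
   sums a_k are nondecreasing and alpha is nondecreasing, c decreases on
   [1, i] and increases on [i, J].  A sequence with such a "valley" shape
   attains its minimum at i, which is exactly the Nash condition. *)

Section PrefixSums.
Variables (R : realType) (J : nat) (x : nat -> R).
Hypothesis x_ge0 : forall j : nat, (1 <= j)%N -> (j <= J)%N -> 0 <= x j.

Lemma apos0 : apos x 0 = 0.
Proof. by rewrite /apos big_geq. Qed.

Lemma aposS (k : nat) : apos x k.+1 = apos x k + x k.+1.
Proof. by rewrite /apos big_nat_recr. Qed.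

Lemma apos_mono (m n : nat) : (m <= n)%N -> (n <= J)%N -> apos x m <= apos x n.
Proof.
elim: n => [|n IH]; first by rewrite leqn0 => /eqP->.
rewrite leq_eqVlt => /orP[/eqP-> //|lt_mn] ltnJ.
rewrite aposS -[leLHS]addr0; apply: lerD; first exact: IH (ltnW ltnJ).
exact: x_ge0.
Qed.

Lemma apos_ge0 (k : nat) : (k <= J)%N -> 0 <= apos x k.
Proof. by rewrite -apos0; apply: apos_mono. Qed.

End PrefixSums.

Arguments apos_mono {R J x} x_ge0 {m n}.
Arguments apos_ge0 {R J x} x_ge0 {k}.

Lemma route_block {R : realType} {J : nat} {x : nat -> R} {route : R -> nat}
    {a : R} :
  (1 <= J)%N -> apos x J = 1 ->
  (forall (a : R) (j : nat), (1 <= j)%N -> (j < J)%N ->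
      apos x j.-1 <= a -> a < apos x j -> route a = j) ->
  (forall a : R, apos x J.-1 <= a -> a <= 1 -> route a = J) ->
  0 <= a -> a <= 1 ->
  exists2 i : nat, [/\ (1 <= i)%N, (i <= J)%N & route a = i] &
                   apos x i.-1 <= a <= apos x i.
Proof.
move=> J_ge1 aposJ route_in route_last a_ge0 a_le1.
have [last_block|before_last] := leP (apos x J.-1) a.
  by exists J; rewrite ?route_last ?aposJ ?last_block ?a_le1.
(* Otherwise take the first edge j >= 1 whose right endpoint exceeds a. *)
pose P j := (0 < j)%N && (a < apos x j).
have P_last : P J.-1.
  rewrite /P before_last andbT lt0n; apply/eqP => J1.
  by move: before_last; rewrite J1 apos0 ltNge a_ge0.
case: (ex_minnP (ex_intro P _ P_last)) => i /andP[i_gt0 a_lt] i_min.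
have i_ltJ : (i < J)%N by have := i_min _ P_last; lia.
have lo : apos x i.-1 <= a.
  case: i i_gt0 a_lt i_min i_ltJ => // [[|i]] _ _ i_min _; first by rewrite apos0.
  by rewrite leNgt; apply/negP => lt; have := i_min i.+1; rewrite /P lt /=; lia.
by exists i; rewrite ?(route_in a i) ?lo ?(ltW a_lt) ?(ltnW i_ltJ).
Qed.

Lemma valley_min {d : Order.disp_t} {T : porderType d} (f : nat -> T)
    {lo i hi : nat} :
  (lo <= i <= hi)%N ->
  (forall k, (lo <= k)%N -> (k < i)%N -> (f k.+1 <= f k)%O) ->
  (forall k, (i <= k)%N -> (k < hi)%N -> (f k <= f k.+1)%O) ->
  forall j, (lo <= j <= hi)%N -> (f i <= f j)%O.
Proof.
move=> /andP[lo_i i_hi] f_dec f_inc j /andP[lo_j j_hi].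
have [j_le_i|i_le_j] := leqP j i.
  pose D := [pred k | (lo <= k <= i)%N].
  have D_convex : {in D &, forall u v w, (u < w < v)%N -> w \in D}.
    by move=> u v; rewrite !inE => ? ? w ?; rewrite inE; lia.
  apply: (Order.NatMonotonyTheory.nonincn_inP D_convex) => //; last by rewrite inE lo_j.
  - by move=> k; rewrite !inE => /andP[? _] /andP[_ ?]; apply: f_dec.
  - by rewrite inE lo_i leqnn.
pose D := [pred k | (i <= k <= hi)%N].
have D_convex : {in D &, forall u v w, (u < w < v)%N -> w \in D}.
  by move=> u v; rewrite !inE => ? ? w ?; rewrite inE; lia.
apply: (Order.NatMonotonyTheory.nondecn_inP D_convex); rewrite ?inE ?leqnn ?i_hi //.
- by move=> k; rewrite !inE => /andP[? _] /andP[_ ?]; apply: f_inc.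
- by rewrite (ltnW i_le_j).
- exact: ltnW.
Qed.

Lemma one_sub_div_le0 (R : realFieldType) (A B : R) :
  0 < B -> B <= A -> 1 - A / B <= 0.
Proof. by move=> B_gt0 B_le_A; rewrite subr_le0 ler_pdivlMr // mul1r. Qed.

Lemma one_sub_div_ge0 (R : realFieldType) (A B : R) :
  0 < B -> A <= B -> 0 <= 1 - A / B.
Proof. by move=> B_gt0 A_le_B; rewrite subr_ge0 ler_pdivrMr // mul1r. Qed.

Definition edge_cost {R : realType} (J : nat) (alpha : R -> R) (ell x : nat -> R)
    (tauJ A : R) (k : nat) : R :=
  ell k + A * tau J alpha ell x tauJ k.

Section EdgeCost.
Variables (R : realType) (J : nat) (alpha : R -> R) (ell x : nat -> R).
Variables (tauJ A : R).
Hypothesis ell_mono :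
  forall i j : nat, (1 <= i)%N -> (i <= j)%N -> (j <= J)%N -> ell i <= ell j.

Local Notation cost := (edge_cost J alpha ell x tauJ A).

Lemma edge_cost_step (k : nat) : (k < J)%N -> alpha (apos x k) != 0 ->
  cost k.+1 - cost k = (ell k.+1 - ell k) * (1 - A / alpha (apos x k)).
Proof. by move=> k_ltJ alpha_nz; rewrite /edge_cost /tau (big_ltn k_ltJ); field. Qed.

Lemma edge_cost_down (k : nat) : (1 <= k)%N -> (k < J)%N ->
  0 < alpha (apos x k) -> alpha (apos x k) <= A -> cost k.+1 <= cost k.
Proof.
move=> k_ge1 k_ltJ ak_gt0 ak_le_A.
rewrite -subr_le0 edge_cost_step ?gt_eqF //.
apply: mulr_ge0_le0; last exact: one_sub_div_le0.
by rewrite subr_ge0 ell_mono.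
Qed.

Lemma edge_cost_up (k : nat) : (1 <= k)%N -> (k < J)%N ->
  0 < alpha (apos x k) -> A <= alpha (apos x k) -> cost k <= cost k.+1.
Proof.
move=> k_ge1 k_ltJ ak_gt0 A_le_ak.
rewrite -subr_ge0 edge_cost_step ?gt_eqF //.
apply: mulr_ge0; last exact: one_sub_div_ge0.
by rewrite subr_ge0 ell_mono.
Qed.

End EdgeCost.

Theorem theorem1 (R : realType) (J : nat) (alpha : R -> R) (ell x : nat -> R)
  (tauJ : R) (route : R -> nat) :
  (1 <= J)%N ->
  (forall a b : R, 0 <= a -> a <= b -> b <= 1 -> alpha a <= alpha b) ->
  (forall a : R, 0 <= a -> a <= 1 -> 0 < alpha a) ->
  (forall i j : nat, (1 <= i)%N -> (i <= j)%N -> (j <= J)%N -> ell i <= ell j) ->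
  (forall j : nat, (1 <= j)%N -> (j <= J)%N -> 0 <= x j) ->
  apos x J = 1 ->
  (forall (a : R) (j : nat), (1 <= j)%N -> (j < J)%N ->
      apos x j.-1 <= a -> a < apos x j -> route a = j) ->
  (forall a : R, apos x J.-1 <= a -> a <= 1 -> route a = J) ->
  forall (a : R) (j' : nat), 0 <= a -> a <= 1 -> (1 <= j')%N -> (j' <= J)%N ->
    ell (route a) + alpha a * tau J alpha ell x tauJ (route a)
    <= ell j' + alpha a * tau J alpha ell x tauJ j'.
Proof.
move=> J_ge1 alpha_mono alpha_gt0 ell_mono x_ge0 aposJ route_in route_last
  a j' a_ge0 a_le1 j'_ge1 j'_le.
have [i [i_ge1 i_le route_a] /andP[lo hi]] :=
  route_block J_ge1 aposJ route_in route_last a_ge0 a_le1.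
have apos_le1 k : (k <= J)%N -> apos x k <= 1.
  by move=> k_le; rewrite -aposJ; apply: (apos_mono x_ge0).
have alpha_apos_gt0 k : (k <= J)%N -> 0 < alpha (apos x k).
  by move=> k_le; rewrite alpha_gt0 ?(apos_ge0 x_ge0) ?apos_le1.
rewrite route_a.
apply: (@valley_min _ _ (edge_cost J alpha ell x tauJ (alpha a)) 1%N i J); rewrite ?i_ge1 ?j'_ge1 //.
- (* before the block of a: a_k <= a_{i-1} <= a *)
  move=> k k_ge1 k_lt_i; have k_ltJ := leq_trans k_lt_i i_le.
  have k_leJ := ltnW k_ltJ.
  apply: edge_cost_down; rewrite ?alpha_apos_gt0 //.
  apply: alpha_mono; rewrite ?(apos_ge0 x_ge0) //.
  by apply: le_trans lo; apply: (apos_mono x_ge0); lia.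
- (* after the block of a: a <= a_i <= a_k *)
  move=> k i_le_k k_ltJ; have k_ge1 := leq_trans i_ge1 i_le_k.
  have k_leJ := ltnW k_ltJ.
  apply: edge_cost_up; rewrite ?alpha_apos_gt0 //.
  apply: alpha_mono; rewrite ?apos_le1 //.
  by apply: le_trans hi _; apply: (apos_mono x_ge0).
Qed.
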